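(* Let $G=(V,E)$ be a finite simple undirected graph with distinct vertex IDs and let $K$ be a positive integer with $\delta(G)\ge K$. Run the procedure Efficient-VM on $G$ with parameter $K$. Then the virtual memory of each active vertex is increased by $K$: for every vertex $v$, in the round in which the color class of $v$ is active, none of the $K$ vertices selected by $v$ is active, and no active vertex other than $v$ selected any of them. Hence during that round the memories of these $K$ vertices are assigned solely to $v$.
   Context: $\Gamma(v)$ is the neighbor set of $v$, $\deg(v)=|\Gamma(v)|$, $\delta(G)=\min_v\deg(v)$. Operation $K$-Next-Modulo$(v,\Gamma(v),K)$: list $\Gamma(v)\cup\{v\}$ in ascending ID order as $u_1,\dots,u_d$ ($d=\deg(v)+1$) with $v=u_i$; $v$ selects $u_{i+1},\dots,u_{i+K}$, indices cyclic modulo $d$. Procedure Efficient-VM$(G,K)$ (synchronous distributed CONGEST model): (1) every vertex $v$ selects its $K$ neighbors by $K$-Next-Modulo (one round); let $G'=(V,E')$ where $E'$ consists of the edges $\{v,u\}$ such that $v$ selected $u$; (2) compute a 2-hop coloring of $G'$, i.e. a coloring in which any two distinct vertices at distance at most $2$ in $G'$ get different colors (by running Linial's coloring algorithm on $G'^2$); (3) process the color classes one per round in round-robin order; in the round of a color class, exactly the vertices of that class are active, and each active vertex $v$ distributes its backup data to the $K$ vertices it selected, using their memories. *)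

From mathcomp Require Import all_boot all_order.
Set Implicit Arguments. Unset Strict Implicit. Unset Printing Implicit Defensive.

Section EfficientVM.
Variables (T : finType) (adj : rel T) (id : T -> nat).

Definition simple_graph := symmetric adj /\ irreflexive adj.

Definition nbrs (v : T) : {set T} := [set u | adj v u].
Definition deg (v : T) : nat := #|nbrs v|.

Definition closed_nbhd_sorted (v : T) : seq T :=
  sort (fun a b => id a <= id b) [seq u <- enum T | adj v u || (u == v)].

(* K-Next-Modulo(v, Gamma(v), K): with v = u_i (0-based index here),
   v selects u_{i+1}, ..., u_{i+K}, indices cyclic modulo d. *)
Definition selected (K : nat) (v : T) : seq T :=
  let s := closed_nbhd_sorted v in
  let d := size s in
  let i := index v s in
  [seq nth v s ((i + j) %% d) | j <- iota 1 K].

Definition selects (K : nat) (v u : T) : bool := u \in selected K v.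

Definition Gp_edge (K : nat) (u w : T) : bool := selects K u w || selects K w u.

Definition two_hop_coloring (K : nat) (col : T -> nat) : Prop :=
  forall u w : T, u != w ->
    (Gp_edge K u w \/ exists x, Gp_edge K u x /\ Gp_edge K x w) ->
    col u != col w.

End EfficientVM.

(* Sorting the closed neighbourhood N[v] gives a duplicate-free sequence of
   length deg v + 1 > K, so the K cyclic successors of v in it, together with
   v itself, are K + 1 distinct vertices; in particular v never selects
   itself. Every vertex selected by v is adjacent to v in G', and a vertex
   selected by both v and w puts v and w at distance 2 in G'; the 2-hop
   coloring therefore separates v from its selected vertices and from every
   other selector of them. *)

From mathcomp Require Import all_boot all_order.

Set Implicit Arguments.
Unset Strict Implicit.
Unset Printing Implicit Defensive.

Lemma uniq_cyclic_window (A : eqType) (x0 : A) (s : seq A) (i n : nat) :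
  uniq s -> n <= size s ->
  uniq [seq nth x0 s ((i + j) %% size s) | j <- iota 0 n].
Proof.
move=> s_uniq n_le; rewrite map_inj_in_uniq ?iota_uniq // => a b.
rewrite !mem_iota !add0n => a_lt b_lt /eqP.
have s_gt0 : 0 < size s := leq_trans (leq_ltn_trans (leq0n a) a_lt) n_le.
rewrite nth_uniq ?ltn_mod // eqn_modDl !modn_small => [/eqP //||];
  exact: leq_trans n_le.
Qed.

Section Selection.

Variables (T : finType) (adj : rel T) (id : T -> nat) (K : nat).
Hypothesis adj_irr : irreflexive adj.
Hypothesis deg_geK : forall v : T, K <= deg adj v.

Lemma closed_nbhd_sorted_uniq (v : T) : uniq (closed_nbhd_sorted adj id v).
Proof. by rewrite sort_uniq filter_uniq ?enum_uniq. Qed.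

Lemma mem_closed_nbhd_sorted (v : T) :
  closed_nbhd_sorted adj id v =i v |: nbrs adj v.
Proof.
by move=> u; rewrite mem_sort mem_filter mem_enum andbT !inE orbC.
Qed.

Lemma size_closed_nbhd_sorted (v : T) :
  size (closed_nbhd_sorted adj id v) = (deg adj v).+1.
Proof.
rewrite -(card_uniqP (closed_nbhd_sorted_uniq v)).
by rewrite (eq_card (mem_closed_nbhd_sorted v)) cardsU1 inE adj_irr.
Qed.

Lemma selected_cons (v : T) :
  let s := closed_nbhd_sorted adj id v in
  v :: selected adj id K v =
    [seq nth v s ((index v s + j) %% size s) | j <- iota 0 K.+1].
Proof.
move=> s; have v_in_s : v \in s by rewrite mem_closed_nbhd_sorted setU11.
by rewrite /= addn0 modn_small ?index_mem // nth_index.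
Qed.

Lemma selected_cons_uniq (v : T) : uniq (v :: selected adj id K v).
Proof.
rewrite selected_cons uniq_cyclic_window ?closed_nbhd_sorted_uniq //.
by rewrite size_closed_nbhd_sorted ltnS.
Qed.

Lemma selects_neq (v u : T) : selects adj id K v u -> u != v.
Proof.
by move=> sel_u; apply: contraTneq sel_u => ->; case/andP: (selected_cons_uniq v).
Qed.

Variable col : T -> nat.
Hypothesis col_2hop : two_hop_coloring adj id K col.

Lemma two_hop_coloring_selects (v u : T) :
  selects adj id K v u -> col u != col v.
Proof.
move=> sel_u; rewrite eq_sym; apply: col_2hop; first by rewrite eq_sym selects_neq.
by left; rewrite /Gp_edge sel_u.
Qed.

Lemma two_hop_coloring_common_selection (v w u : T) :
  selects adj id K v u -> selects adj id K w u -> w != v -> col w != col v.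
Proof.
move=> sel_vu sel_wu w_neq_v; apply: col_2hop => //.
by right; exists u; rewrite /Gp_edge sel_vu sel_wu orbT.
Qed.

End Selection.

Theorem lemma1 (T : finType) (adj : rel T) (id : T -> nat) (K : nat)
  (col : T -> nat) :
  simple_graph adj ->
  injective id ->
  0 < K ->
  (forall v : T, K <= deg adj v) ->
  two_hop_coloring adj id K col ->
  forall v : T,
    [/\ size (selected adj id K v) = K,
        uniq (selected adj id K v),
        v \notin selected adj id K v,
        (forall u, selects adj id K v u -> col u != col v) &
        (forall u w, selects adj id K v u -> w != v -> col w = col v ->
           ~~ selects adj id K w u)].
Proof.
move=> [_ adj_irr] _ _ deg_geK col_2hop v.
have /andP[v_notin sel_uniq] := selected_cons_uniq id adj_irr deg_geK v.
split=> //.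
- by rewrite size_map size_iota.
- exact: two_hop_coloring_selects.
- move=> u w sel_vu w_neq_v col_wv; apply/negP => sel_wu.
  by move: (two_hop_coloring_common_selection col_2hop sel_vu sel_wu w_neq_v);
    rewrite col_wv eqxx.
Qed.
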